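(* Let $\mathcal M,\mathcal X,\mathcal Y$ be finite sets, $P_M$ a distribution on $\mathcal M$, $W_{Y|X}$ a channel from $\mathcal X$ to $\mathcal Y$, and $P_X$ any distribution on $\mathcal X$. For every $s\in(0,\tfrac12]$, \[ P_{js}(P_M,W_{Y|X})\le e^{\frac{s}{1-s}\left(H_{1-s}(M)-I^{\uparrow}_{1-s}(X;Y|P_X\times W_{Y|X})\right)} =\Big(\sum_m P_M(m)^{1-s}\Big)^{\frac1{1-s}}\sum_y\Big(\sum_x P_X(x)W_{Y|X}(y|x)^{1-s}\Big)^{\frac1{1-s}}. \]
   Context: A code $\phi=(\mathsf e,\mathsf d)$ consists of $\mathsf e:\mathcal M\to\mathcal X$ and $\mathsf d:\mathcal Y\to\mathcal M$; $P_{js}[\phi|P_M,W_{Y|X}]:=\sum_{m}P_M(m)W_{Y|X}(\{y:\mathsf d(y)\ne m\}|\mathsf e(m))$ and $P_{js}(P_M,W_{Y|X}):=\inf_\phi P_{js}[\phi|P_M,W_{Y|X}]$. $H_{1-s}(M):=\frac1s\log\sum_m P_M(m)^{1-s}$. For $P_{XY}=P_X\times W_{Y|X}$, $I^{\uparrow}_{1-s}(X;Y|P_{XY}):=-\frac{1-s}{s}\log\sum_y\big(\sum_x P_X(x)W_{Y|X}(y|x)^{1-s}\big)^{\frac1{1-s}}$. *)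

From mathcomp Require Import all_boot.
From Stdlib Require Import Reals.
Set Implicit Arguments. Unset Strict Implicit. Unset Printing Implicit Defensive.
Open Scope R_scope.

Notation "\rsum_ ( i : T ) F" := (\big[Rplus/0]_(i : T) F)
  (at level 41, F at level 41, i, T at level 50) : R_scope.

(* Real power with the convention 0^a = 0 (used for a > 0);
   note Stdlib's Rpower 0 a = 1, which would be wrong here. *)
Definition rpow (x a : R) : R :=
  if Req_EM_T x 0 then 0 else Rpower x a.

Definition is_distr (T : finType) (P : T -> R) : Prop :=
  (forall t, 0 <= P t) /\ \rsum_(t : T) P t = 1.

(* Channel W(y|x), written W x y. *)
Definition is_channel (X Y : finType) (W : X -> Y -> R) : Prop :=
  forall x, is_distr (W x).

Definition Pjs_code (M X Y : finType) (PM : M -> R) (W : X -> Y -> R)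
    (e : {ffun M -> X}) (d : {ffun Y -> M}) : R :=
  \rsum_(m : M) (PM m * \big[Rplus/0]_(y : Y | d y != m) W (e m) y).

(* Infimum over all codes; the set of codes is finite, so the infimum is the
   minimum.  1 is used as the neutral element of Rmin; this is harmless since
   every code error probability is at most 1. *)
Definition Pjs (M X Y : finType) (PM : M -> R) (W : X -> Y -> R) : R :=
  \big[Rmin/1]_(e : {ffun M -> X}) \big[Rmin/1]_(d : {ffun Y -> M})
     Pjs_code PM W e d.

Definition H_renyi (M : finType) (PM : M -> R) (s : R) : R :=
  / s * ln (\rsum_(m : M) rpow (PM m) (1 - s)).

Definition I_up (X Y : finType) (PX : X -> R) (W : X -> Y -> R) (s : R) : R :=
  - ((1 - s) / s) *
    ln (\rsum_(y : Y) rpow (\rsum_(x : X) (PX x * rpow (W x y) (1 - s))) (/ (1 - s))).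

(* Gallager's random-coding argument with rho = s / (1 - s), so that
   (1 - s) (1 + rho) = 1 and s <= 1/2 gives rho <= 1.  For a fixed encoder e,
   the MAP decoder errs on (m, y) only if some m' <> m is at least as likely,
   so the error is bounded by
     sum_m sum_y (P_M(m) W(y|e m))^(1-s) (sum_(m' <> m) (P_M(m') W(y|e m'))^(1-s))^rho.
   Averaging over encoders drawn i.i.d. from P_X, the codeword e m is
   independent of the competing codewords, and Jensen's inequality for the
   concave map t |-> t^rho moves the average inside the inner power.  What
   remains is (sum_m P_M(m)^(1-s))^(1+rho) sum_y g(y)^(1+rho) with
   g(y) = sum_x P_X(x) W(y|x)^(1-s), which is the claimed bound since
   1 + rho = 1 / (1 - s); the minimal error is at most this average. *)
From HB Require Import structures.
From mathcomp Require Import all_boot.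
From Stdlib Require Import Reals Lra.
Set Implicit Arguments.
Unset Strict Implicit.
Unset Printing Implicit Defensive.
Open Scope R_scope.

Section RealMonoidLaws.
Import Monoid.
Fact Rplus_assoc' : associative Rplus. Proof. by move=> *; rewrite Rplus_assoc. Qed.
Fact Rmult_assoc' : associative Rmult. Proof. by move=> *; rewrite Rmult_assoc. Qed.
HB.instance Definition _ :=
  isComLaw.Build R 0 Rplus Rplus_assoc' Rplus_comm Rplus_0_l.
HB.instance Definition _ :=
  isComLaw.Build R 1 Rmult Rmult_assoc' Rmult_comm Rmult_1_l.
HB.instance Definition _ := isMulLaw.Build R 0 Rmult Rmult_0_l Rmult_0_r.
HB.instance Definition _ :=
  isAddLaw.Build R Rmult Rplus Rmult_plus_distr_r Rmult_plus_distr_l.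
End RealMonoidLaws.

Lemma rpow0 a : rpow 0 a = 0.
Proof. by rewrite /rpow; case: Req_EM_T. Qed.

Lemma rpow_Rpower x a : 0 < x -> rpow x a = Rpower x a.
Proof. by move=> hx; rewrite /rpow; case: Req_EM_T => // h; lra. Qed.

Lemma rpow_ge0 x a : 0 <= rpow x a.
Proof. by rewrite /rpow; case: Req_EM_T => h /=; [lra | left; apply: exp_pos]. Qed.

Lemma rpow_gt0 x a : 0 < x -> 0 < rpow x a.
Proof. by move=> hx; rewrite rpow_Rpower //; apply: exp_pos. Qed.

Lemma rpow_mult_distr x y a :
  0 <= x -> 0 <= y -> rpow (x * y) a = rpow x a * rpow y a.
Proof.
move=> hx hy.
have [->|hx0] := Req_dec x 0; first by rewrite Rmult_0_l !rpow0 Rmult_0_l.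
have [->|hy0] := Req_dec y 0; first by rewrite Rmult_0_r !rpow0 Rmult_0_r.
rewrite !rpow_Rpower ?Rpower_mult_distr //; try lra.
by apply: Rmult_lt_0_compat; lra.
Qed.

Lemma rpow_mult x a b : 0 <= x -> rpow (rpow x a) b = rpow x (a * b).
Proof.
move=> hx; have [->|hx0] := Req_dec x 0; first by rewrite !rpow0.
have hx' : 0 < x by lra.
by rewrite (rpow_Rpower a hx') rpow_Rpower ?Rpower_mult ?rpow_Rpower //;
  apply: exp_pos.
Qed.

Lemma rpow_plus x a b : 0 <= x -> rpow x (a + b) = rpow x a * rpow x b.
Proof.
move=> hx; have [->|hx0] := Req_dec x 0; first by rewrite !rpow0 Rmult_0_l.
by rewrite !rpow_Rpower ?Rpower_plus //; lra.
Qed.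

Lemma rpow_1 x : 0 <= x -> rpow x 1 = x.
Proof.
move=> hx; have [->|hx0] := Req_dec x 0; first by rewrite rpow0.
by rewrite rpow_Rpower ?Rpower_1 //; lra.
Qed.

Lemma Rle_rpow_l x y a : 0 < a -> 0 <= x <= y -> rpow x a <= rpow y a.
Proof.
move=> ha [hx hxy]; have [->|hx0] := Req_dec x 0.
  by rewrite rpow0; apply: rpow_ge0.
by rewrite !rpow_Rpower; try lra; apply: Rle_Rpower_l; lra.
Qed.

(* Convexity of exp: its tangent line at [r * a], evaluated at [a] and at [0]. *)
Lemma exp_scale_le r a : 0 <= r <= 1 -> exp (r * a) <= r * exp a + (1 - r).
Proof.
move=> hr.
have hup : exp (r * a) * (1 + (a - r * a)) <= exp a.
  rewrite [X in _ <= X](_ : exp a = exp (r * a) * exp (a - r * a)); last first.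
    by rewrite -exp_plus; f_equal; ring.
  by apply: Rmult_le_compat_l; [left; apply: exp_pos | apply: exp_ineq1_le].
have hdown : exp (r * a) * (1 + (0 - r * a)) <= 1.
  rewrite [X in _ <= X](_ : 1 = exp (r * a) * exp (0 - r * a)); last first.
    by rewrite -exp_plus -exp_0; f_equal; ring.
  by apply: Rmult_le_compat_l; [left; apply: exp_pos | apply: exp_ineq1_le].
have -> : exp (r * a) = r * (exp (r * a) * (1 + (a - r * a))) +
    (1 - r) * (exp (r * a) * (1 + (0 - r * a))) by ring.
apply: Rplus_le_compat; first by apply: Rmult_le_compat_l; lra.
by rewrite -[X in _ <= X]Rmult_1_r; apply: Rmult_le_compat_l; lra.
Qed.

Lemma rpow_le_tangent Z K rho : 0 <= Z -> 0 < K -> 0 < rho <= 1 ->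
  rpow Z rho <= (1 - rho) * rpow K rho + rho * (rpow K rho / K) * Z.
Proof.
move=> hZ hK hr; have hKr := rpow_gt0 rho hK.
have [->|hZ0] := Req_dec Z 0.
  have : 0 <= (1 - rho) * rpow K rho by apply: Rmult_le_pos; lra.
  by rewrite rpow0 Rmult_0_r; lra.
have hZK : 0 < Z / K by apply: Rdiv_lt_0_compat; lra.
have := @exp_scale_le rho (ln (Z / K)) (conj (Rlt_le _ _ (proj1 hr)) (proj2 hr)).
rewrite exp_ln // => hconv.
have -> : rpow Z rho = rpow K rho * rpow (Z / K) rho.
  by rewrite -rpow_mult_distr; [f_equal; field|..]; lra.
have -> : (1 - rho) * rpow K rho + rho * (rpow K rho / K) * Z =
    rpow K rho * (rho * (Z / K) + (1 - rho)) by field; lra.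
by rewrite (rpow_Rpower rho hZK) /Rpower; apply: Rmult_le_compat_l; lra.
Qed.

Lemma Rsum_le (I : Type) (r : seq I) (P : pred I) (F G : I -> R) :
  (forall i, P i -> F i <= G i) ->
  \big[Rplus/0]_(i <- r | P i) F i <= \big[Rplus/0]_(i <- r | P i) G i.
Proof.
move=> h; apply: (big_ind2 (fun a b => a <= b)) => //; first lra.
by move=> *; apply: Rplus_le_compat.
Qed.
Arguments Rsum_le {I r P F G}.

Lemma Rsum_ge0 (I : Type) (r : seq I) (P : pred I) (F : I -> R) :
  (forall i, P i -> 0 <= F i) -> 0 <= \big[Rplus/0]_(i <- r | P i) F i.
Proof. by move=> h; apply: (big_ind (fun a => 0 <= a)) => // *; lra. Qed.

Lemma Rsum_filter_le (I : finType) (P : pred I) (F : I -> R) :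
  (forall i, 0 <= F i) ->
  \big[Rplus/0]_(i | P i) F i <= \big[Rplus/0]_(i : I) F i.
Proof.
move=> h; rewrite big_mkcond /=; apply: Rsum_le => i _.
by case: (P i); [apply: Rle_refl | apply: h].
Qed.

Lemma Rsum_term_le (I : finType) (P : pred I) (F : I -> R) j :
  (forall i, 0 <= F i) -> P j -> F j <= \big[Rplus/0]_(i | P i) F i.
Proof.
move=> h hj; rewrite (bigD1 j) //=.
have := @Rsum_ge0 I (index_enum I) (fun i => P i && (i != j)) F (fun i _ => h i).
lra.
Qed.
Arguments Rsum_term_le {I} P F j.

Lemma Rsum_gt0 (I : finType) j (F : I -> R) :
  (forall i, 0 <= F i) -> 0 < F j -> 0 < \big[Rplus/0]_(i : I) F i.
Proof. by move=> h hj; apply: Rlt_le_trans hj _; apply: Rsum_term_le. Qed.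
Arguments Rsum_gt0 {I} j {F}.

Lemma Rsum_le0_eq0 (I : finType) (F : I -> R) :
  (forall i, 0 <= F i) -> \big[Rplus/0]_(i : I) F i <= 0 -> forall i, F i = 0.
Proof.
move=> h hs i; have := Rsum_term_le xpredT F i h erefl.
by have := h i; lra.
Qed.

Lemma Rsum_gt0_exists (I : Type) (r : seq I) (F : I -> R) :
  0 < \big[Rplus/0]_(i <- r) F i -> exists i, 0 < F i.
Proof.
elim: r => [|x r IH]; first by rewrite big_nil; lra.
rewrite big_cons => h; have [hx|hx] := Rlt_dec 0 (F x); first by exists x.
by apply: IH; lra.
Qed.

Lemma distr_exists_gt0 (T : finType) (P : T -> R) :
  is_distr P -> exists t, 0 < P t.
Proof. by case=> _ h1; apply: (Rsum_gt0_exists (r := index_enum T)); lra. Qed.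

Lemma big_Rmin_le (I : finType) (x0 : R) (F : I -> R) i :
  \big[Rmin/x0]_(j : I) F j <= F i.
Proof.
have : i \in index_enum I by rewrite mem_index_enum.
elim: (index_enum I) => [|x r IH] //; rewrite in_cons big_cons.
case/orP=> [/eqP <-|/IH]; first exact: Rmin_l.
by apply: Rle_trans; apply: Rmin_r.
Qed.
Arguments big_Rmin_le {I x0 F} i.

Lemma exists_argmax (I : finType) (f : I -> R) (i0 : I) :
  exists i, forall j, f j <= f i.
Proof.
suff [i hi] : exists i, forall j, j \in enum I -> f j <= f i.
  by exists i => j; apply: hi; rewrite mem_enum.
elim: (enum I) => [|x r [i IH]]; first by exists i0.
have [hx|hx] := Rle_dec (f x) (f i).
  by exists i => j; rewrite in_cons => /orP [/eqP ->|/IH].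
by exists x => j; rewrite in_cons => /orP [/eqP ->|/IH]; lra.
Qed.

Lemma Rle_mean (I : finType) (p F : I -> R) c :
  (forall i, 0 <= p i) -> \big[Rplus/0]_(i : I) p i = 1 ->
  (forall i, c <= F i) -> c <= \big[Rplus/0]_(i : I) (p i * F i).
Proof.
move=> hp h1 hc; rewrite -[c]Rmult_1_l -h1 big_distrl.
by apply: Rsum_le => i _; apply: Rmult_le_compat_l.
Qed.

(* Summing the tangent-line bound [rpow_le_tangent] at [K] against [a]. *)
Lemma jensen_rpow (I : finType) (a Z : I -> R) G K rho :
  (forall i, 0 <= a i) -> (forall i, 0 <= Z i) ->
  \big[Rplus/0]_(i : I) a i = G ->
  \big[Rplus/0]_(i : I) (a i * Z i) <= G * K -> 0 <= K -> 0 < rho <= 1 ->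
  \big[Rplus/0]_(i : I) (a i * rpow (Z i) rho) <= G * rpow K rho.
Proof.
move=> ha hZ hG hGK hK hr.
have [K0|K0] := Req_dec K 0.
  subst K; rewrite Rmult_0_r in hGK.
  have haZ i : 0 <= a i * Z i by apply: Rmult_le_pos.
  have h0 := Rsum_le0_eq0 haZ hGK.
  rewrite rpow0 Rmult_0_r big1; first lra.
  by move=> i _; case: (Rmult_integral _ _ (h0 i)) => ->;
    rewrite ?rpow0; ring.
have hK' : 0 < K by lra.
have hKr := rpow_gt0 rho hK'.
set c := rho * (rpow K rho / K).
have hc : 0 <= c by apply: Rmult_le_pos; [lra | left; apply: Rdiv_lt_0_compat].
apply: (Rle_trans _ (\big[Rplus/0]_(i : I)
    (a i * ((1 - rho) * rpow K rho + c * Z i)))).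
  by apply: Rsum_le => i _; apply: Rmult_le_compat_l => //; apply: rpow_le_tangent.
have -> : \big[Rplus/0]_(i : I) (a i * ((1 - rho) * rpow K rho + c * Z i)) =
    \big[Rplus/0]_(i : I) a i * ((1 - rho) * rpow K rho) +
    c * \big[Rplus/0]_(i : I) (a i * Z i).
  by rewrite big_distrl big_distrr -big_split /=; apply: eq_bigr => i _; ring.
have := Rmult_le_compat_l _ _ _ hc hGK.
have -> : c * (G * K) = rho * rpow K rho * G by rewrite /c; field; lra.
by rewrite hG; nra.
Qed.

Lemma Rprod_at (I : finType) (F : I -> R) j :
  (forall i, i != j -> F i = 1) -> \big[Rmult/1]_(i : I) F i = F j.
Proof. by move=> h1; rewrite (bigD1 j) //= big1 ?Rmult_1_r. Qed.
Arguments Rprod_at {I F} j.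

Lemma Rprod_at2 (I : finType) (F : I -> R) j k : k != j ->
  (forall i, i != j -> i != k -> F i = 1) ->
  \big[Rmult/1]_(i : I) F i = F j * F k.
Proof.
move=> hkj h1; rewrite (bigD1 j) //= (bigD1 k) //= big1 ?Rmult_1_r ?Rmult_assoc //.
by move=> i /andP [hij hik]; apply: h1.
Qed.

(** * Random encoders *)

Definition prod_distr (M X : finType) (PX : X -> R) (e : {ffun M -> X}) : R :=
  \big[Rmult/1]_(m : M) PX (e m).
Arguments prod_distr {M X} PX e.

Section ProductDistribution.
Variables (M X : finType) (PX : X -> R).
Hypothesis hPX : is_distr PX.

Lemma prod_distr_ge0 (e : {ffun M -> X}) : 0 <= prod_distr PX e.
Proof.
apply: (big_ind (fun a => 0 <= a)) => //; first lra.
  by move=> *; apply: Rmult_le_pos.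
by move=> m _; case: hPX.
Qed.

Lemma sum_prod_distr_prod (c : M -> X -> R) :
  \big[Rplus/0]_(e : {ffun M -> X})
     (prod_distr PX e * \big[Rmult/1]_(m : M) c m (e m)) =
  \big[Rmult/1]_(m : M) \big[Rplus/0]_(x : X) (PX x * c m x).
Proof. by rewrite bigA_distr_bigA; apply: eq_bigr => e _; rewrite -big_split. Qed.

Lemma sum_distr_1 : \big[Rplus/0]_(x : X) (PX x * 1) = 1.
Proof. by case: hPX => _ {2}<-; apply: eq_bigr => x _; rewrite Rmult_1_r. Qed.

Lemma sum_prod_distr : \big[Rplus/0]_(e : {ffun M -> X}) prod_distr PX e = 1.
Proof.
transitivity (\big[Rmult/1]_(m : M) \big[Rplus/0]_(x : X) (PX x * 1)).
  rewrite -sum_prod_distr_prod; apply: eq_bigr => e _.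
  by rewrite big1 ?Rmult_1_r.
by rewrite big1 // => m _; apply: sum_distr_1.
Qed.

Lemma sum_prod_distr1 (m : M) (f : X -> R) :
  \big[Rplus/0]_(e : {ffun M -> X}) (prod_distr PX e * f (e m)) =
  \big[Rplus/0]_(x : X) (PX x * f x).
Proof.
pose c i x := if i == m then f x else 1.
rewrite (eq_bigr (fun e => prod_distr PX e * \big[Rmult/1]_(i : M) c i (e i))).
  rewrite sum_prod_distr_prod (Rprod_at m) /c ?eqxx // => i /negbTE ->.
  exact: sum_distr_1.
by move=> e _; rewrite (Rprod_at m) /c ?eqxx // => i /negbTE ->.
Qed.

Lemma sum_prod_distr2 (m m' : M) (f h : X -> R) : m' != m ->
  \big[Rplus/0]_(e : {ffun M -> X}) (prod_distr PX e * (f (e m) * h (e m'))) =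
  \big[Rplus/0]_(x : X) (PX x * f x) * \big[Rplus/0]_(x : X) (PX x * h x).
Proof.
move=> hm; pose c i x := if i == m then f x else if i == m' then h x else 1.
rewrite (eq_bigr (fun e => prod_distr PX e * \big[Rmult/1]_(i : M) c i (e i))).
  rewrite sum_prod_distr_prod (Rprod_at2 hm).
    by congr (_ * _); apply: eq_bigr => x _; rewrite /c ?(negbTE hm) eqxx.
  move=> i /negbTE hi /negbTE hi'; rewrite -[RHS]sum_distr_1.
  by apply: eq_bigr => x _; rewrite /c hi hi'.
move=> e _; rewrite (Rprod_at2 hm) /c ?(negbTE hm) ?eqxx //.
by move=> i /negbTE -> /negbTE ->.
Qed.

End ProductDistribution.

(** * The random-coding bound *)

Section RandomCoding.
Variables (M X Y : finType) (PM : M -> R) (W : X -> Y -> R) (PX : X -> R) (s : R).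
Hypotheses (hPM : is_distr PM) (hW : is_channel W) (hPX : is_distr PX)
  (hs : 0 < s <= 1 / 2).

Definition rho := s / (1 - s).

Definition renyi_sum := \big[Rplus/0]_(m : M) rpow (PM m) (1 - s).

Definition gallager_y (y : Y) :=
  \big[Rplus/0]_(x : X) (PX x * rpow (W x y) (1 - s)).

Definition competitors (e : {ffun M -> X}) (m : M) (y : Y) :=
  \big[Rplus/0]_(m' | m' != m) (rpow (PM m') (1 - s) * rpow (W (e m') y) (1 - s)).

Definition code_bound (e : {ffun M -> X}) :=
  \big[Rplus/0]_(m : M) \big[Rplus/0]_(y : Y)
    (rpow (PM m) (1 - s) * rpow (W (e m) y) (1 - s) * rpow (competitors e m y) rho).

Lemma rho_bounds : 0 < rho <= 1.
Proof.
have hinv : 0 < / (1 - s) by apply: Rinv_0_lt_compat; lra.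
rewrite /rho /Rdiv; split; first by apply: Rmult_lt_0_compat; lra.
have -> : s * / (1 - s) = 1 - (1 - 2 * s) * / (1 - s) by field; lra.
have : 0 <= (1 - 2 * s) * / (1 - s) by apply: Rmult_le_pos; lra.
lra.
Qed.

Lemma inv_one_minus_s : / (1 - s) = 1 + rho.
Proof. by rewrite /rho; field; lra. Qed.

Lemma PM_ge0 m : 0 <= PM m. Proof. by case: hPM. Qed.
Lemma W_ge0 x y : 0 <= W x y. Proof. by case: (hW x). Qed.

Lemma renyi_sum_ge0 : 0 <= renyi_sum.
Proof. by apply: Rsum_ge0 => m _; apply: rpow_ge0. Qed.

Lemma gallager_y_ge0 y : 0 <= gallager_y y.
Proof.
by apply: Rsum_ge0 => x _; apply: Rmult_le_pos; [case: hPX | apply: rpow_ge0].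
Qed.

Lemma renyi_sum_gt0 : 0 < renyi_sum.
Proof.
have [m0 hm0] := distr_exists_gt0 hPM.
by apply: (Rsum_gt0 m0); [move=> m; apply: rpow_ge0 | apply: rpow_gt0].
Qed.

Lemma sum_rpow_gallager_y_gt0 :
  0 < \big[Rplus/0]_(y : Y) rpow (gallager_y y) (/ (1 - s)).
Proof.
have [x0 hx0] := distr_exists_gt0 hPX.
have [y0 hy0] := distr_exists_gt0 (hW x0).
apply: (Rsum_gt0 y0); [move=> y; apply: rpow_ge0 | apply: rpow_gt0].
apply: (Rsum_gt0 x0); last by apply: Rmult_lt_0_compat => //; apply: rpow_gt0.
by move=> x; apply: Rmult_le_pos; [case: hPX | apply: rpow_ge0].
Qed.

Lemma le_rpow_competitors a b T :
  0 <= a -> a <= b -> rpow b (1 - s) <= T -> a <= rpow a (1 - s) * rpow T rho.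
Proof.
move=> ha hab hbT.
have {1}-> : a = rpow a (1 - s) * rpow (rpow a (1 - s)) rho.
  rewrite rpow_mult // -rpow_plus // -[X in X = _]rpow_1 //; f_equal.
  by rewrite /rho; field; lra.
apply: Rmult_le_compat_l; first exact: rpow_ge0.
apply: Rle_rpow_l; first by case: rho_bounds.
split; first exact: rpow_ge0.
by apply: Rle_trans hbT; apply: Rle_rpow_l; lra.
Qed.

Lemma Pjs_le_code_bound e : Pjs PM W <= code_bound e.
Proof.
have [m0 _] := distr_exists_gt0 hPM.
have [dec hdec] := @fin_all_exists Y (fun _ => M)
  (fun y m => forall m', PM m' * W (e m') y <= PM m * W (e m) y)
  (fun y => exists_argmax (fun m => PM m * W (e m) y) m0).
apply: Rle_trans (big_Rmin_le e) _.
apply: Rle_trans (big_Rmin_le (finfun dec)) _.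
apply: Rsum_le => m _; rewrite big_distrr big_mkcond /=; apply: Rsum_le => y _.
rewrite ffunE; case: ifP => hdy; last first.
  by apply: Rmult_le_pos; [apply: Rmult_le_pos|]; apply: rpow_ge0.
have hPW m' : 0 <= PM m' * W (e m') y.
  by apply: Rmult_le_pos; [apply: PM_ge0 | apply: W_ge0].
rewrite -rpow_mult_distr; [|apply: PM_ge0 | apply: W_ge0].
apply: (le_rpow_competitors (hPW m) (hdec y m)).
rewrite rpow_mult_distr; [|apply: PM_ge0 | apply: W_ge0].
apply: (Rsum_term_le (fun m' => m' != m)
  (fun m' => rpow (PM m') (1 - s) * rpow (W (e m') y) (1 - s))) => //.
by move=> i; apply: Rmult_le_pos; apply: rpow_ge0.
Qed.

Lemma mean_code_bound_term_le m y :
  \big[Rplus/0]_(e : {ffun M -> X}) (prod_distr PX e *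
     (rpow (PM m) (1 - s) * rpow (W (e m) y) (1 - s) * rpow (competitors e m y) rho))
  <= rpow (PM m) (1 - s) * (gallager_y y * rpow (renyi_sum * gallager_y y) rho).
Proof.
set w := fun x => rpow (W x y) (1 - s).
rewrite (eq_bigr (fun e => rpow (PM m) (1 - s) *
    (prod_distr PX e * w (e m) * rpow (competitors e m y) rho))); last first.
  by move=> e _; rewrite /w; ring.
rewrite -big_distrr /=; apply: Rmult_le_compat_l; first exact: rpow_ge0.
have hg := gallager_y_ge0 y.
apply: jensen_rpow rho_bounds.
- by move=> e; apply: Rmult_le_pos; [apply: prod_distr_ge0 | apply: rpow_ge0].
- by move=> e; apply: Rsum_ge0 => i _; apply: Rmult_le_pos; apply: rpow_ge0.
- exact: sum_prod_distr1.
- rewrite (eq_bigr (fun e => \big[Rplus/0]_(m' | m' != m) (rpow (PM m') (1 - s) *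
      (prod_distr PX e * (w (e m) * w (e m')))))); last first.
    by move=> e _; rewrite big_distrr; apply: eq_bigr => m' _ /=; rewrite /w; ring.
  rewrite exchange_big /=.
  rewrite (eq_bigr (fun m' => rpow (PM m') (1 - s) * (gallager_y y * gallager_y y)));
    last by move=> m' hm'; rewrite -big_distrr /= sum_prod_distr2.
  apply: Rle_trans (Rsum_filter_le _ _) _.
    by move=> i; apply: Rmult_le_pos; [apply: rpow_ge0 | nra].
  by rewrite -big_distrl -/renyi_sum /=; have := renyi_sum_ge0; nra.
- by apply: Rmult_le_pos; [apply: renyi_sum_ge0|].
Qed.

Lemma Pjs_le_gallager :
  Pjs PM W <= rpow renyi_sum (/ (1 - s)) *
    \big[Rplus/0]_(y : Y) rpow (gallager_y y) (/ (1 - s)).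
Proof.
apply: Rle_trans (Rle_mean (prod_distr_ge0 hPX) (sum_prod_distr M hPX)
  Pjs_le_code_bound) _.
rewrite /code_bound (eq_bigr (fun e => \big[Rplus/0]_(m : M) \big[Rplus/0]_(y : Y)
    (prod_distr PX e * (rpow (PM m) (1 - s) * rpow (W (e m) y) (1 - s) *
      rpow (competitors e m y) rho)))); last first.
  by move=> e _; rewrite big_distrr; apply: eq_bigr => m _; rewrite big_distrr.
rewrite exchange_big; under eq_bigr => m _ do rewrite exchange_big.
apply: Rle_trans (Rsum_le (fun m _ => Rsum_le
  (fun y _ => mean_code_bound_term_le m y))) _.
rewrite -(eq_bigr _ (fun m _ => big_distrr _ _ _)) -big_distrl /= -/renyi_sum.
have hA := renyi_sum_ge0.
rewrite inv_one_minus_s rpow_plus // rpow_1 //.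
apply: Req_le; rewrite !big_distrr; apply: eq_bigr => y _ /=.
have hg := gallager_y_ge0 y.
by rewrite rpow_plus // rpow_1 // rpow_mult_distr //; ring.
Qed.

Lemma exp_gallager_exponent :
  exp (s / (1 - s) * (H_renyi PM s - I_up PX W s)) =
  rpow renyi_sum (/ (1 - s)) * \big[Rplus/0]_(y : Y) rpow (gallager_y y) (/ (1 - s)).
Proof.
have hA := renyi_sum_gt0; have := sum_rpow_gallager_y_gt0.
rewrite /H_renyi /I_up -/renyi_sum /gallager_y.
set B := \big[Rplus/0]_(y : Y) _ => hB.
rewrite (_ : s / (1 - s) * _ = / (1 - s) * ln renyi_sum + ln B); last by field; lra.
by rewrite exp_plus exp_ln // rpow_Rpower.
Qed.

End RandomCoding.

Theorem mainTheorem3 (M X Y : finType) (PM : M -> R) (W : X -> Y -> R)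
    (PX : X -> R) (s : R) :
  is_distr PM -> is_channel W -> is_distr PX ->
  0 < s <= 1 / 2 ->
  Pjs PM W <= exp (s / (1 - s) * (H_renyi PM s - I_up PX W s)) /\
  exp (s / (1 - s) * (H_renyi PM s - I_up PX W s)) =
    rpow (\rsum_(m : M) rpow (PM m) (1 - s)) (/ (1 - s)) *
    \rsum_(y : Y) rpow (\rsum_(x : X) (PX x * rpow (W x y) (1 - s))) (/ (1 - s)).
Proof.
move=> hPM hW hPX hs.
have hexp := exp_gallager_exponent hPM hW hPX hs.
split; last exact: hexp.
by rewrite hexp; apply: Pjs_le_gallager.
Qed.
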